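(* Let $m=x_{i_1}\cdots x_{i_s}$ ($i_1\le\dots\le i_s$, $s\ge1$) be a monomial of $S=k[x_1,\dots,x_n]$ and $B=\mathrm{Borel}(m)$. For $0\le d\le s-1$ let $c_d$ be the number of minimal monomial generators of $\operatorname{trunc}_d(B)$ of degree $d$ (so $c_0=1$). Then the Hilbert series of $S/B$ is \[\mathrm{HS}(S/B)=\sum_{d=0}^{s-1}\frac{c_d\,t^d}{(1-t)^{\,n-i_{d+1}}},\] and the multiplicity of $S/B$ is $e(S/B)=\sum_{d:\ i_{d+1}=i_1}c_d$.
   Context: $\mathrm{Borel}(m)$ is the smallest monomial ideal containing $m$ closed under Borel moves $\mu\mapsto\mu\frac{x_{a_1}}{x_{b_1}}\cdots\frac{x_{a_r}}{x_{b_r}}$ ($a_t<b_t$, all $x_{b_t}\mid\mu$). For a monomial $\mu=x_{k_1}\cdots x_{k_r}$ ($k_1\le\dots\le k_r$), $\operatorname{trunc}_d(\mu)=x_{k_1}\cdots x_{k_d}$ if $d\le r$ and $=\mu$ otherwise; $\operatorname{trunc}_d(I)$ is the ideal generated by the $d$-truncations of the monomials of $I$, with $\operatorname{trunc}_0(B)=(1)$. *)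

From HB Require Import structures.
From mathcomp Require Import all_boot all_order all_algebra.
Set Implicit Arguments. Unset Strict Implicit. Unset Printing Implicit Defensive.
Import Order.TTheory GRing.Theory Num.Theory.

(* Monomials of S = k[x_1,...,x_n] as exponent vectors; the ordinal
   i : 'I_n stands for the variable x_(i+1). *)
Definition mono (n : nat) := {ffun 'I_n -> nat}.

Section Monomials.
Variable n : nat.

Definition mdeg (u : mono n) : nat := \sum_(i < n) u i.
Definition mdvd (u v : mono n) : bool := [forall i, u i <= v i].

(* the monomial u = x_(k_1) ... x_(k_r), k_1 <= ... <= k_r, as the
   nondecreasing sequence of its variable indices *)
Definition mono_seq (u : mono n) : seq 'I_n :=
  flatten [seq nseq (u i) i | i <- enum 'I_n].
Definition seq_mono (s : seq 'I_n) : mono n := [ffun i => count_mem i s].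

(* trunc_d(u) : product of the first d variables (or u itself if d >= deg) *)
Definition trunc (d : nat) (u : mono n) : mono n := seq_mono (take d (mono_seq u)).

(* A monomial ideal, represented by the set of its monomials. *)
Definition mono_ideal (I : mono n -> Prop) : Prop :=
  forall u v, I u -> mdvd u v -> I v.

(* v = u * (x_(a_1)/x_(b_1)) ... (x_(a_r)/x_(b_r)), a_t < b_t, with the
   product x_(b_1)...x_(b_r) dividing u (pairs (a_t,b_t)). *)
Definition borel_move (u v : mono n) : Prop :=
  exists ps : seq ('I_n * 'I_n),
    all (fun p : 'I_n * 'I_n => (p.1 < p.2)%N) ps /\
    forall i, count (fun p : 'I_n * 'I_n => p.2 == i) ps <= u i /\
              v i = u i + count (fun p : 'I_n * 'I_n => p.1 == i) ps - count (fun p : 'I_n * 'I_n => p.2 == i) ps.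

Definition borel_closed (I : mono n -> Prop) : Prop :=
  forall u v, I u -> borel_move u v -> I v.

Definition Borel (m : mono n) : mono n -> Prop :=
  fun u => forall I, mono_ideal I -> I m -> borel_closed I -> I u.

Definition trunc_ideal (d : nat) (I : mono n -> Prop) : mono n -> Prop :=
  fun v => exists u, I u /\ mdvd (trunc d u) v.

Definition min_gen (I : mono n -> Prop) (u : mono n) : Prop :=
  I u /\ forall v, I v -> mdvd v u -> v = u.

Definition is_card (P : mono n -> Prop) (k : nat) : Prop :=
  exists l : seq (mono n), uniq l /\ (forall u, P u <-> u \in l) /\ size l = k.

(* i_(d+1) (1-based) for m = x_(i_1)...x_(i_s), i_1 <= ... <= i_s *)
Definition var_idx (m : mono n) (d : nat) : nat :=
  (nth 0 [seq val k | k <- mono_seq m] d).+1.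

End Monomials.

(* inv1mt r k = coefficient of t^k in the power series 1/(1-t)^r *)
Fixpoint inv1mt (r k : nat) : nat :=
  match r with
  | 0 => nat_of_bool (k == 0)
  | r'.+1 => \sum_(i < k.+1) inv1mt r' i
  end.

(* Multiplicity of a standard graded algebra with Hilbert function hf:
   HS(t) = sum_j hf j t^j = h(t)/(1-t)^D with h a polynomial (coefficient
   list h) such that h(1) <> 0; then e = h(1). *)
Definition is_multiplicity (hf : nat -> nat) (e : int) : Prop :=
  exists (D : nat) (h : seq int),
    (forall j, Posz (hf j) = (\sum_(i < size h | (i <= j)%N) h`_i * Posz (inv1mt D (j - i)))%R)
    /\ (\sum_(i < size h) h`_i)%R = e /\ e != 0%R.

From HB Require Import structures.
From mathcomp Require Import all_boot all_order all_algebra.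
From mathcomp Require Import zify ring.
From Stdlib Require Import FunctionalExtensionality.
Import Order.TTheory GRing.Theory Num.Theory.

Set Implicit Arguments. Unset Strict Implicit. Unset Printing Implicit Defensive.

(* A monomial u lies in Borel(m) iff it dominates m: for every a, the degree
   of u in x_1, ..., x_a is at least that of m.  Borel moves only shift degree
   to smaller variables, and conversely a divisor of u is reached from m by
   moving one unit from some x_b to some x_a, a < b, at a time.  Truncation
   replaces these partial degrees p by min(d, p), so the degree-d generators of
   trunc_d(B) are the degree-d monomials dominating trunc_d(m).  A monomial u
   outside B has a largest d < deg m such that u dominates trunc_d(m), and then
   u = trunc_d(u) q with q a monomial in x_(i_(d+1)+1), ..., x_n; this gives
   the term c_d t^d / (1-t)^(n-i_(d+1)) of the Hilbert series.  Multiplied by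
   (1-t)^(n-i_1) the series becomes a polynomial whose value at t = 1 only
   retains the terms with i_(d+1) = i_1. *)

Lemma sorted_flatten_nseq (T : eqType) (g k : T -> nat) (l : seq T) :
  sorted leq (map g l) -> sorted leq (flatten [seq nseq (k i) (g i) | i <- l]).
Proof.
rewrite !sorted_pairwise; try exact: leq_trans.
elim: l => //= x l IH /andP[gxl /IH {}IH]; rewrite pairwise_cat IH andbT.
apply/andP; split.
- apply/allrelP => y z /nseqP[-> _] /flatten_mapP[i il /nseqP[-> _]].
  by apply: (allP gxl); apply: map_f.
- by elim: (k x) => //= t ->; rewrite andbT; apply/allP => y /nseqP[-> _].
Qed.

Section SortedPrefix.
Variable a : nat.
Let below := fun k => k < a.

Lemma count_below_path x L : a <= x -> path leq x L -> count below L = 0.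
Proof.
move=> ax /(order_path_min leq_trans) /allP xL.
apply/eqP; rewrite -leqn0 leqNgt -has_count.
by apply/hasP => -[k /xL xk]; rewrite /below ltnNge (leq_trans ax xk).
Qed.

Lemma count_take_sorted L d : sorted leq L ->
  count below (take d L) = minn d (count below L).
Proof.
elim: L d => [|x L IH] d pL /=; first by rewrite minn0.
case: d => [|d] /=; first by rewrite min0n.
case: (ltnP x a) => xa; first by rewrite /below xa IH ?(path_sorted pL) // minnSS.
have -> : below x = false by rewrite /below ltnNge xa.
rewrite (count_below_path xa pL) minn0; apply/eqP.
by rewrite -leqn0 -(count_below_path xa pL) -{2}(cat_take_drop d L) count_cat leq_addr.
Qed.

Lemma nth_sorted_below L d : sorted leq L -> d < size L ->
  (d < count below L) = (nth 0 L d < a).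
Proof.
elim: L d => [|x L IH] d //= pL dL.
case: (ltnP x a) => xa.
  have -> : below x by [].
  by case: d dL => [|d] //=; rewrite add1n !ltnS => dL; rewrite IH ?(path_sorted pL).
have -> : below x = false by rewrite /below ltnNge xa.
rewrite (count_below_path xa pL) ltn0; apply/esym/negbTE; rewrite -leqNgt.
apply: (leq_trans xa); have : nth 0 (x :: L) d \in x :: L by apply: mem_nth.
by rewrite inE => /predU1P[-> //|]; apply: (allP (order_path_min leq_trans pL)).
Qed.

End SortedPrefix.

Section PartialDegree.
Variable n : nat.
Implicit Types u v w : mono n.

Definition pdeg u (a : nat) : nat := \sum_(i < n | i < a) u i.

Lemma pdegS u (i : 'I_n) : pdeg u i.+1 = pdeg u i + u i.
Proof.
rewrite /pdeg (bigD1 i) //= addnC; congr (_ + _).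
by apply: eq_bigl => j /=; rewrite ltnS -val_eqE /=; case: ltngtP.
Qed.

Lemma pdeg_ge u a : n <= a -> pdeg u a = mdeg u.
Proof. by move=> na; apply: eq_bigl => i; rewrite (leq_trans (ltn_ord i) na). Qed.

Lemma pdeg_le_mdeg u a : pdeg u a <= mdeg u.
Proof. by rewrite /pdeg /mdeg big_mkcond leq_sum // => i _; case: ifP. Qed.

Lemma leq_pdeg u a b : a <= b -> pdeg u a <= pdeg u b.
Proof.
move=> ab; rewrite /pdeg !(big_mkcond (fun i : 'I_n => i < _)) leq_sum //= => i _.
by case: ifP => // ia; rewrite (leq_trans ia ab).
Qed.

Lemma pdeg_split u a b : a <= b -> pdeg u b = pdeg u a + \sum_(i < n | a <= i < b) u i.
Proof.
move=> ab; rewrite /pdeg (bigID (fun i : 'I_n => i < a)) /=; congr (_ + _);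
by apply: eq_bigl => i /=; move: (nat_of_ord i) => x; apply/idP/idP; lia.
Qed.

Lemma pdeg_inj u v : (forall a, a <= n -> pdeg u a = pdeg v a) -> u = v.
Proof.
move=> h; apply/ffunP => i; apply: (@addnI (pdeg u i)).
by rewrite {2}h 1?ltnW // -!pdegS h.
Qed.

Lemma mdvd_refl u : mdvd u u.
Proof. exact/forallP. Qed.

Lemma pdeg_dvd u v a : mdvd u v -> pdeg u a <= pdeg v a.
Proof. by move=> /forallP uv; apply: leq_sum => i _; apply: uv. Qed.

Lemma mdvd_mdeg_eq u v : mdvd u v -> mdeg v <= mdeg u -> u = v.
Proof.
move=> /forallP uv vu; apply/ffunP => i; apply/eqP; rewrite eqn_leq uv /=.
have : \sum_(j < n) (v j - u j) == 0 by rewrite sumnB ?subn_eq0 // => j _; apply: uv.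
by rewrite sum_nat_eq0 => /forallP /(_ i); rewrite subn_eq0.
Qed.

Lemma mono_le_mdeg u i : u i <= mdeg u.
Proof. by rewrite /mdeg (bigD1 i) //= leq_addr. Qed.

Definition mmul u v : mono n := [ffun i => u i + v i].
Definition mdiv u v : mono n := [ffun i => u i - v i].

Lemma pdeg_mmul u v a : pdeg (mmul u v) a = pdeg u a + pdeg v a.
Proof. by rewrite /pdeg -big_split; apply: eq_bigr => i _; rewrite ffunE. Qed.

Lemma mdeg_mmul u v : mdeg (mmul u v) = mdeg u + mdeg v.
Proof. by rewrite -!(@pdeg_ge _ n) // pdeg_mmul. Qed.

Lemma pdeg_mdiv u v a : mdvd v u -> pdeg (mdiv u v) a = pdeg u a - pdeg v a.
Proof.
move=> /forallP vu; rewrite /pdeg -sumnB => [|i _]; last exact: vu.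
by apply: eq_bigr => i _; rewrite ffunE.
Qed.

Lemma mmulI u : injective (mmul u).
Proof.
by move=> v w /ffunP vw; apply/ffunP => i; have := vw i; rewrite !ffunE => /addnI.
Qed.

Lemma mdivK u v : mdvd v u -> mmul v (mdiv u v) = u.
Proof. by move=> /forallP vu; apply/ffunP => i; rewrite !ffunE subnKC. Qed.

Lemma sum_count_mem (P : pred 'I_n) (s : seq 'I_n) :
  \sum_(i < n | P i) count_mem i s = count P s.
Proof.
elim: s => [|x s IH] /=; first by rewrite big1.
rewrite big_split /= IH; congr (_ + _); rewrite (big_mkcond P) (bigD1 x) //=.
rewrite eqxx big1 ?addn0; first by case: (P x).
by move=> i /negbTE; rewrite eq_sym => ->; case: (P i).
Qed.

Lemma pdeg_seq_mono (s : seq 'I_n) a :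
  pdeg (seq_mono s) a = count (fun k : 'I_n => k < a) s.
Proof. by rewrite /pdeg -sum_count_mem; apply: eq_bigr => i _; rewrite ffunE. Qed.

Lemma count_mono_seq (P : pred 'I_n) u :
  count P (mono_seq u) = \sum_(i < n | P i) u i.
Proof.
rewrite count_flatten -map_comp sumnE big_map big_enum (big_mkcond P) /=.
by apply: eq_bigr => i _; rewrite count_nseq; case: (P i); rewrite ?mul1n.
Qed.

Lemma size_mono_seq u : size (mono_seq u) = mdeg u.
Proof. by rewrite -count_predT count_mono_seq. Qed.

Lemma sorted_mono_seq u : sorted leq (map val (mono_seq u)).
Proof.
rewrite map_flatten -map_comp.
under eq_map => i do rewrite /= map_nseq.
by apply: sorted_flatten_nseq; rewrite val_enum_ord iota_sorted.
Qed.

End PartialDegree.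

Section Truncation.
Variable n : nat.
Implicit Types u v : mono n.

Lemma pdeg_mono_seq u a : pdeg u a = count (fun k : 'I_n => k < a) (mono_seq u).
Proof. by rewrite count_mono_seq. Qed.

Lemma pdeg_trunc d u a : pdeg (trunc d u) a = minn d (pdeg u a).
Proof.
rewrite pdeg_seq_mono pdeg_mono_seq -!(count_map val (fun k => k < a)) map_take.
exact/count_take_sorted/sorted_mono_seq.
Qed.

Lemma mdeg_trunc d u : mdeg (trunc d u) = minn d (mdeg u).
Proof. by rewrite -!(@pdeg_ge _ _ n) // pdeg_trunc. Qed.

Lemma trunc_dvd d u : mdvd (trunc d u) u.
Proof.
apply/forallP => i; rewrite ffunE.
have <- : count_mem i (mono_seq u) = u i by rewrite count_mono_seq big_pred1_eq.
by rewrite -{2}(cat_take_drop d (mono_seq u)) count_cat leq_addr.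
Qed.

Lemma trunc_mdeg u : trunc (mdeg u) u = u.
Proof. by apply: pdeg_inj => a _; rewrite pdeg_trunc; apply/minn_idPr/pdeg_le_mdeg. Qed.

Lemma var_idx_pdeg u d a : d < mdeg u -> (d < pdeg u a) = (var_idx u d <= a).
Proof.
move=> du; rewrite pdeg_mono_seq -(count_map val (fun k => k < a)).
by rewrite nth_sorted_below ?sorted_mono_seq // size_map size_mono_seq.
Qed.

Lemma var_idx_le u d : d < mdeg u -> var_idx u d <= n.
Proof. by move=> du; rewrite -(var_idx_pdeg _ du) pdeg_ge. Qed.

Lemma var_idx0_le u d : d < mdeg u -> var_idx u 0 <= var_idx u d.
Proof.
move=> du; rewrite -(var_idx_pdeg _ (leq_ltn_trans (leq0n d) du)).
by apply: leq_ltn_trans (leq0n d) _; rewrite var_idx_pdeg.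
Qed.

End Truncation.

Section Dominance.
Variable n : nat.
Implicit Types u v w : mono n.

Definition dominates v u := [forall a : 'I_n.+1, pdeg v a <= pdeg u a].

Lemma dominatesP v u : reflect (forall a, pdeg v a <= pdeg u a) (dominates v u).
Proof.
apply: (iffP forallP) => [vu a|vu a]; last exact: vu.
case: (leqP a n) => an; first exact: (vu (Ordinal (an : a < n.+1))).
by have := vu ord_max; rewrite /= !pdeg_ge // ltnW.
Qed.

Lemma dominates_trans w v u : dominates v w -> dominates w u -> dominates v u.
Proof.
by move=> /dominatesP vw /dominatesP wu; apply/dominatesP => a; apply: leq_trans (wu a).
Qed.

Lemma dominates_dvd v u : mdvd v u -> dominates v u.
Proof. by move=> vu; apply/dominatesP => a; apply: pdeg_dvd. Qed.

Lemma dominates_mdeg v u : dominates v u -> mdeg v <= mdeg u.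
Proof. by move=> /dominatesP /(_ n); rewrite !pdeg_ge. Qed.

Lemma dominates_trunc d v u : dominates v u -> dominates (trunc d v) (trunc d u).
Proof.
move=> /dominatesP vu; apply/dominatesP => a.
by rewrite !pdeg_trunc leq_min geq_minl /= geq_min vu orbT.
Qed.

Lemma dominates_trunc0 v u : dominates (trunc 0 v) u.
Proof. by apply/dominatesP => a; rewrite pdeg_trunc min0n. Qed.

Lemma dominates_trunc_le d e u : d <= e -> dominates (trunc d u) (trunc e u).
Proof. by move=> de; apply/dominatesP => a; rewrite !pdeg_trunc; lia. Qed.

Lemma borel_move_dominates u v : borel_move u v -> dominates u v.
Proof.
move=> [ps [ltps moves]]; apply/dominatesP => a.
pose cnt (f : 'I_n * 'I_n -> 'I_n) := count (fun p => f p < a) ps.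
have sum_cnt f : \sum_(i < n | i < a) count (fun p => f p == i) ps = cnt f.
  rewrite /cnt -(count_map f (fun i : 'I_n => i < a)) -sum_count_mem.
  by apply: eq_bigr => i _; rewrite count_map.
have balance : pdeg v a + cnt snd = pdeg u a + cnt fst.
  rewrite -!sum_cnt /pdeg -!big_split; apply: eq_bigr => i _ /=.
  by case: (moves i) => le_out ->; move: le_out; lia.
have : cnt snd <= cnt fst.
  have -> : cnt snd = count (fun p : 'I_n * 'I_n => (p.1 < p.2) && (p.2 < a)) ps.
    by apply: eq_in_count => p /(allP ltps) ->.
  by apply: sub_count => p /andP[]; apply: ltn_trans.
by move: balance; lia.
Qed.

Lemma Borel_dominates m u : Borel m u -> dominates m u.
Proof.
move=> Bu; apply: (Bu (dominates m)).
- by move=> v w mv /dominates_dvd; apply: dominates_trans.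
- exact/dominates_dvd/mdvd_refl.
- by move=> v w mv /borel_move_dominates; apply: dominates_trans.
Qed.

Lemma sum_nat_eq_ord (P : pred 'I_n) (b : 'I_n) : \sum_(i < n | P i) (b == i) = P b.
Proof.
rewrite big_mkcond (bigD1 b) //= eqxx big1 ?addn0; first by case: (P b).
by move=> i /negbTE; rewrite eq_sym => ->; case: (P i).
Qed.

Definition excess w u := \sum_(i < n) (w i - u i).

Definition xmove w (a b : 'I_n) : mono n := [ffun i => w i + (a == i) - (b == i)].

Lemma borel_move_xmove w (a b : 'I_n) : a < b -> 0 < w b -> borel_move w (xmove w a b).
Proof.
move=> ab wb; exists [:: (a, b)]; rewrite /= ab; split=> // i; rewrite ffunE !addn0.
by split=> //; case: eqP => // <-.
Qed.

Lemma xmoveE w (a b : 'I_n) i : a != b -> 0 < w b ->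
  xmove w a b i + (b == i) = w i + (a == i).
Proof.
move=> ab wb; rewrite ffunE; case: (b =P i) => [<-|_]; last by rewrite !addn0 subn0.
by rewrite (negbTE ab) !addn0 subn1 addn1 prednK.
Qed.

Lemma pdeg_xmove w (a b : 'I_n) c : a != b -> 0 < w b ->
  pdeg (xmove w a b) c + (b < c) = pdeg w c + (a < c).
Proof.
move=> ab wb; have sum_lt (d : 'I_n) : \sum_(i < n | i < c) (d == i) = (d < c).
  exact: (sum_nat_eq_ord (fun i : 'I_n => i < c)).
by rewrite -!sum_lt -!big_split; apply: eq_bigr => i _; apply: xmoveE.
Qed.

Lemma excess_xmove w u (a b : 'I_n) : w a < u a -> u b < w b ->
  (excess (xmove w a b) u).+1 = excess w u.
Proof.
move=> wau ubw; have ab : a != b by apply/eqP => eab; move: wau ubw; rewrite eab; lia.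
have one : \sum_(i < n) (b == i) = 1 := sum_nat_eq_ord predT b.
rewrite -addn1 -one -big_split.
apply: eq_bigr => i _; have := xmoveE i ab (leq_ltn_trans (leq0n _) ubw).
case: (eqVneq b i) => [<-|_]; first by rewrite (negbTE ab) /=; lia.
by case: (eqVneq a i) => [<-|_] /=; lia.
Qed.

Lemma dominates_xmove w u (b0 : 'I_n) : dominates w u -> u b0 < w b0 ->
  exists a b : 'I_n, [/\ a < b, w a < u a, u b < w b & dominates (xmove w a b) u].
Proof.
move=> /dominatesP wu ub0.
(* b: first variable where w exceeds u; a: last one before b where u exceeds w *)
case: (@arg_minnP _ b0 (fun i => u i < w i) val ub0) => b ubw bmin.
have wu_before (i : 'I_n) : i < b -> w i <= u i.
  by move=> ib; rewrite leqNgt; apply: contraTN ib => /bmin; rewrite -leqNgt.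
have lt_pdeg_b : pdeg w b < pdeg u b.
  by have := wu b.+1; rewrite !pdegS; move: ubw; lia.
have [a0 a0P] : exists a : 'I_n, (a < b) && (w a < u a).
  apply/existsP; apply: contraTT lt_pdeg_b => /existsPn wa; rewrite -leqNgt.
  by apply: leq_sum => i ib; have := wa i; rewrite ib /= -leqNgt.
case: (@arg_maxnP _ a0 (fun i => (i < b) && (w i < u i)) val a0P) => a /andP[ab wau] amax.
have wu_between (i : 'I_n) : a < i -> i < b -> w i = u i.
  move=> ai ib; apply/eqP; rewrite eqn_leq wu_before //= leqNgt.
  by apply: contraTN ai => wui; rewrite -leqNgt; apply: amax; rewrite ib.
have lt_pdeg_mid c : a < c <= b -> pdeg w c < pdeg u c.
  move=> /andP[ac cb]; move: lt_pdeg_b; rewrite (pdeg_split w cb) (pdeg_split u cb).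
  rewrite (eq_bigr u) ?ltn_add2r // => i /andP[ci ib].
  exact: wu_between (leq_trans ac ci) ib.
exists a, b; split => //; apply/dominatesP => c.
have ab' : a != b by rewrite -val_eqE /= neq_ltn ab.
have := pdeg_xmove c ab' (leq_ltn_trans (leq0n _) ubw); have := wu c.
case: (ltnP a c) => ac; case: (ltnP b c) => bc; try lia.
by have := lt_pdeg_mid c; rewrite ac bc; lia.
Qed.

Lemma dominates_closed (I : mono n -> Prop) w u :
  mono_ideal I -> borel_closed I -> I w -> dominates w u -> I u.
Proof.
move=> idealI closedI; have [k] := ubnP (excess w u); elim: k w => // k IH w.
rewrite ltnS => exk Iw wu; case: (boolP [exists b, u b < w b]) => [/existsP[b0 ub0]|].
  have [a [b [ab wau ubw wu']]] := dominates_xmove wu ub0.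
  apply: (IH (xmove w a b)) wu'; first by rewrite -ltnS excess_xmove.
  exact: closedI Iw (borel_move_xmove ab (leq_ltn_trans (leq0n _) ubw)).
move=> /existsPn no_excess; apply: idealI Iw _.
by apply/forallP => i; rewrite leqNgt no_excess.
Qed.

Lemma Borel_iff m u : Borel m u <-> dominates m u.
Proof.
split; first exact: Borel_dominates.
by move=> mu I idealI Im closedI; apply: dominates_closed mu.
Qed.

End Dominance.

Section TruncatedBorel.
Variable n : nat.
Variable m : mono n.
Implicit Types u v w p q : mono n.

Lemma trunc_ideal_Borel_dominates d v :
  trunc_ideal d (Borel m) v -> dominates (trunc d m) v.
Proof.
move=> [u [/Borel_iff mu tuv]]; apply: dominates_trans (dominates_dvd tuv).
exact: dominates_trunc.
Qed.

Lemma min_gen_trunc_Borel d v : d <= mdeg m -> mdeg v = d ->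
  min_gen (trunc_ideal d (Borel m)) v <-> dominates (trunc d m) v.
Proof.
move=> dm dv; split=> [[/trunc_ideal_Borel_dominates //]|/dominatesP].
move=> tmv; have {}tmv a : minn d (pdeg m a) <= pdeg v a by rewrite -pdeg_trunc.
have pdeg_v a : pdeg v a <= d by rewrite -dv pdeg_le_mdeg.
(* v * (m / trunc_d m) lies in Borel(m) and truncates back to v *)
set u := mmul v (mdiv m (trunc d m)).
have pdeg_u a : pdeg u a = pdeg v a + (pdeg m a - minn d (pdeg m a)).
  by rewrite pdeg_mmul pdeg_mdiv ?trunc_dvd // pdeg_trunc.
have Bu : Borel m u.
  by apply/Borel_iff/dominatesP => a; rewrite pdeg_u; have := tmv a; lia.
have tu : trunc d u = v.
  apply: pdeg_inj => a _; rewrite pdeg_trunc pdeg_u.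
  by have := tmv a; have := pdeg_v a; lia.
split; first by exists u; rewrite tu mdvd_refl.
move=> w [u' [Bu' tw]] wv; apply: mdvd_mdeg_eq wv _.
have := dominates_mdeg (dominates_dvd tw); rewrite mdeg_trunc dv.
by have := dominates_mdeg (Borel_dominates Bu'); lia.
Qed.

Definition supp_from (c : nat) q := pdeg q c == 0.

Section Layer.
Variable d : nat.
Hypothesis dm : d < mdeg m.
Let c := var_idx m d.

Lemma pdeg_trunc_var_idx a : pdeg (trunc d m) a = if c <= a then d else pdeg m a.
Proof. by rewrite pdeg_trunc -var_idx_pdeg //; case: ltnP; lia. Qed.

Lemma pdeg_trunc_succ a : pdeg (trunc d.+1 m) a = pdeg (trunc d m) a + (c <= a).
Proof. by rewrite !pdeg_trunc -var_idx_pdeg //; case: ltnP; lia. Qed.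

Lemma layer_mmul p q : mdeg p = d -> dominates (trunc d m) p -> supp_from c q ->
  [/\ dominates (trunc d m) (mmul p q), ~~ dominates (trunc d.+1 m) (mmul p q)
    & trunc d (mmul p q) = p].
Proof.
move=> dp /dominatesP tmp /eqP qc.
have pdeg_p a : pdeg p a <= d by rewrite -dp pdeg_le_mdeg.
split.
- by apply/dominatesP => a; rewrite pdeg_mmul (leq_trans (tmp a)) ?leq_addr.
- apply/dominatesP => /(_ c); rewrite pdeg_trunc_succ pdeg_trunc_var_idx leqnn pdeg_mmul qc.
  by have := pdeg_p c; lia.
- apply: pdeg_inj => a _; rewrite pdeg_trunc pdeg_mmul.
  have := tmp a; have := pdeg_p a; rewrite pdeg_trunc_var_idx.
  case: (leqP c a) => ca; first lia.
  by have := leq_pdeg q (ltnW ca); rewrite qc; lia.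
Qed.

Lemma layer_trunc u : dominates (trunc d m) u -> ~~ dominates (trunc d.+1 m) u ->
  [/\ mdeg (trunc d u) = d, dominates (trunc d m) (trunc d u)
    & supp_from c (mdiv u (trunc d u))].
Proof.
move=> /dominatesP tmu /forallPn[a' /negP tm1u].
have tmu' := tmu a'; move: tm1u tmu'; rewrite pdeg_trunc_succ pdeg_trunc_var_idx.
case: (leqP c a') => [ca' tm1u tmu'|]; last by lia.
have pdeg_u_a' : pdeg u a' = d by lia.
split.
- by have := tmu n; rewrite mdeg_trunc pdeg_trunc !pdeg_ge //; lia.
- apply/dominatesP => a; rewrite [X in _ <= X]pdeg_trunc.
  by have := tmu a; have := pdeg_trunc d m a; lia.
- rewrite /supp_from pdeg_mdiv ?trunc_dvd // pdeg_trunc.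
  by have := leq_pdeg u ca'; lia.
Qed.

End Layer.
End TruncatedBorel.

Section Counting.

Lemma count_bij (T1 T2 : eqType) (l1 : seq T1) (l2 : seq T2) (P : pred T1) (Q : pred T2)
    (f : T1 -> T2) :
  uniq l1 -> uniq l2 -> {in [seq x <- l1 | P x] &, injective f} ->
  (forall x, x \in l1 -> P x -> (f x \in l2) && Q (f x)) ->
  (forall y, y \in l2 -> Q y -> exists2 x, (x \in l1) && P x & f x = y) ->
  count P l1 = count Q l2.
Proof.
move=> u1 u2 inj_f f_to f_onto; rewrite -!size_filter -(size_map f).
apply/perm_size/uniq_perm; rewrite ?filter_uniq ?map_inj_in_uniq ?filter_uniq //.
move=> y; rewrite mem_filter; apply/mapP/idP.
  by move=> [x]; rewrite mem_filter => /andP[Px l1x] ->; rewrite andbC f_to.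
move=> /andP[Qy l2y]; have [x /andP[l1x Px] <-] := f_onto y l2y Qy.
by exists x; rewrite // mem_filter Px.
Qed.

Lemma count_allpairs (T1 T2 : Type) (l1 : seq T1) (l2 : seq T2) (P : pred T1) (Q : pred T2) :
  count (fun x => P x.1 && Q x.2) [seq (x, y) | x <- l1, y <- l2] = count P l1 * count Q l2.
Proof.
elim: l1 => //= x l1 IH; rewrite count_cat IH count_map mulnDl; congr (_ + _).
case Px: (P x); rewrite ?mul1n ?mul0n; first by apply: eq_count => y /=; rewrite Px.
by rewrite -(count_pred0 l2); apply: eq_count => y /=; rewrite Px.
Qed.

Lemma count_telescope (T : Type) (l : seq T) (R : nat -> pred T) N :
  (forall x, R 0 x) -> (forall d x, R d.+1 x -> R d x) ->
  count (fun x => ~~ R N x) l = \sum_(d < N) count (fun x => R d x && ~~ R d.+1 x) l.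
Proof.
move=> R0 RS; have telescope_at x : ~~ R N x = \sum_(d < N) (R d x && ~~ R d.+1 x) :> nat.
  elim: N => [|N IHN]; first by rewrite big_ord0 R0.
  rewrite big_ord_recr /= -IHN; have := RS N x.
  by case: (R N x); case: (R N.+1 x) => // /(_ isT).
elim: l => [|x l IH] /=; first by rewrite big1.
by rewrite big_split /= -IH telescope_at.
Qed.

Lemma count_partition (T : Type) (l : seq T) (P : pred T) (g : T -> nat) N :
  (forall x, P x -> g x < N) ->
  count P l = \sum_(i < N) count (fun x => P x && (g x == i)) l.
Proof.
move=> gN; elim: l => [|x l IH] /=; first by rewrite big1.
rewrite big_split /= -IH; congr (_ + _); case Px: (P x) => /=; last by rewrite big1.
rewrite (bigD1 (Ordinal (gN x Px))) //= eqxx big1 // => i /negbTE.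
by rewrite eq_sym -val_eqE /= => ->.
Qed.

Lemma is_card_count n (P : mono n -> Prop) k (l : seq (mono n)) (b : pred (mono n)) :
  is_card P k -> uniq l -> (forall u, P u <-> (u \in l) && b u) -> k = count b l.
Proof.
move=> [l' [ul' [P_l' <-]]] ul Pl; rewrite -size_filter; apply/perm_size/uniq_perm.
- exact: ul'.
- exact: filter_uniq.
by move=> u; rewrite mem_filter andbC; apply/idP/idP => [/P_l'/Pl|/Pl/P_l'].
Qed.

End Counting.

Section Enumeration.
Variable n : nat.
Implicit Types u q : mono n.

Definition monos_of_deg j : seq (mono n) :=
  [seq u <- map (fun f : {ffun 'I_n -> 'I_j.+1} => [ffun i => val (f i)] : mono n)
                (enum {ffun 'I_n -> 'I_j.+1}) | mdeg u == j].

Lemma monos_of_deg_uniq j : uniq (monos_of_deg j).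
Proof.
apply: filter_uniq; rewrite map_inj_uniq ?enum_uniq // => f g /ffunP fg.
by apply/ffunP => i; apply: val_inj; have := fg i; rewrite !ffunE.
Qed.

Lemma mem_monos_of_deg j u : (u \in monos_of_deg j) = (mdeg u == j).
Proof.
rewrite mem_filter; case: eqP => //= <-; apply/mapP.
exists [ffun i => inord (u i)]; first by rewrite mem_enum.
by apply/ffunP => i; rewrite !ffunE inordK // ltnS mono_le_mdeg.
Qed.

Lemma mdeg_eq0 u : (mdeg u == 0) = (u == [ffun=> 0]).
Proof.
rewrite sum_nat_eq0; apply/forallP/eqP => [u0|-> i]; last by rewrite ffunE.
by apply/ffunP => i; rewrite ffunE; apply/eqP/u0.
Qed.

Definition setv u (c : 'I_n) x : mono n := [ffun i => if i == c then x else u i].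

Lemma setv_id u c : setv u c (u c) = u.
Proof. by apply/ffunP => i; rewrite ffunE; case: eqP => // ->. Qed.

Lemma setv_setv u c x y : setv (setv u c x) c y = setv u c y.
Proof. by apply/ffunP => i; rewrite !ffunE; case: eqP. Qed.

Lemma setv_at u c x : setv u c x c = x.
Proof. by rewrite ffunE eqxx. Qed.

Lemma mdeg_setv u c x : mdeg (setv u c x) + u c = mdeg u + x.
Proof.
rewrite /mdeg (bigD1 c) // [in RHS](bigD1 c) //= setv_at.
rewrite (eq_bigr u) => [|i /negbTE ic]; last by rewrite ffunE ic.
by rewrite -addnA addnC; congr (_ + _); rewrite addnC.
Qed.

Lemma pdeg_setv u (c : 'I_n) x a : a <= c -> pdeg (setv u c x) a = pdeg u a.
Proof.
move=> ac; apply: eq_bigr => i ia; rewrite ffunE; case: eqP => // ic.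
by move: (leq_trans ia ac); rewrite ic ltnn.
Qed.

Lemma supp_from_setv u (c : 'I_n) x : supp_from c (setv u c x) = supp_from c u.
Proof. by rewrite /supp_from pdeg_setv. Qed.

Lemma supp_fromS u (c : 'I_n) : supp_from c.+1 u = supp_from c u && (u c == 0).
Proof. by rewrite /supp_from pdegS addn_eq0. Qed.

Lemma count_supp_from_slice (c : 'I_n) k i : i <= k ->
  count (fun u => supp_from c u && (k - u c == i)) (monos_of_deg k) =
  count (supp_from c.+1) (monos_of_deg i).
Proof.
move=> ik; symmetry; apply: (@count_bij _ _ _ _ _ _ (fun q => setv q c (k - i))).
- exact: monos_of_deg_uniq.
- exact: monos_of_deg_uniq.
- move=> q q'; rewrite !mem_filter !supp_fromS => /andP[/andP[_ /eqP qc] _].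
  move=> /andP[/andP[_ /eqP q'c] _] /(congr1 (fun u => setv u c 0)).
  by rewrite !setv_setv; move: (setv_id q c) (setv_id q' c); rewrite qc q'c => -> ->.
- move=> q; rewrite mem_monos_of_deg supp_fromS => /eqP dq /andP[suppq /eqP qc].
  rewrite mem_monos_of_deg supp_from_setv setv_at subKn // suppq eqxx andbT.
  by rewrite -(eqn_add2r (q c)) mdeg_setv dq qc addn0 subnKC // eqxx.
- move=> u; rewrite mem_monos_of_deg => /eqP du /andP[suppu /eqP uc].
  have uck : u c <= k by rewrite -du mono_le_mdeg.
  exists (setv u c 0); last by rewrite setv_setv -uc subKn // setv_id.
  rewrite mem_monos_of_deg supp_fromS supp_from_setv setv_at suppu !andbT.
  by rewrite -(eqn_add2r (u c)) mdeg_setv du addn0 -uc subnK.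
Qed.

Lemma count_supp_from c k : c <= n ->
  count (supp_from c) (monos_of_deg k) = inv1mt (n - c) k.
Proof.
move=> cn; have [r er] : exists r, n - c = r by exists (n - c).
elim: r c k cn er => [|r IH] c k cn er; rewrite er.
  have -> : c = n by apply/eqP; rewrite eqn_leq cn -subn_eq0 er.
  rewrite (@eq_in_count _ _ (pred1 [ffun=> 0])) => [|u]; last first.
    by rewrite mem_monos_of_deg /supp_from pdeg_ge // mdeg_eq0.
  rewrite count_uniq_mem ?monos_of_deg_uniq // mem_monos_of_deg eq_sym.
  by have := mdeg_eq0 [ffun=> 0]; rewrite eqxx => /eqP ->.
have cn' : c < n by rewrite -subn_gt0 er.
have inv1mtS : inv1mt r.+1 k = \sum_(i < k.+1) inv1mt r i by [].
rewrite inv1mtS (@count_partition _ _ _ (fun u => k - u (Ordinal cn')) k.+1) => [|u _].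
  apply: eq_bigr => i _; rewrite (count_supp_from_slice (Ordinal cn')); last by rewrite -ltnS.
  by have := IH c.+1 i cn'; rewrite subnS er => /(_ erefl).
by rewrite ltnS leq_subr.
Qed.

End Enumeration.

Section HilbertFunction.
Variable n : nat.
Variable m : mono n.
Implicit Types u p q : mono n.

Let layer d u := dominates (trunc d m) u && ~~ dominates (trunc d.+1 m) u.

Lemma count_layer d j : d < mdeg m -> d <= j ->
  count (layer d) (monos_of_deg n j) =
  count (dominates (trunc d m)) (monos_of_deg n d) * inv1mt (n - var_idx m d) (j - d).
Proof.
move=> dm dj; rewrite -(@count_supp_from n (var_idx m d) (j - d) (var_idx_le dm)).
(* u <-> (trunc_d u, u / trunc_d u) *)
rewrite -count_allpairs; symmetry.
apply: (@count_bij _ _ _ _ _ _ (fun pq : mono n * mono n => mmul pq.1 pq.2)).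
- by apply: allpairs_uniq; rewrite ?monos_of_deg_uniq // => -[p q] [p' q'] _ _ /= ->.
- exact: monos_of_deg_uniq.
- move=> [p q] [p' q']; rewrite !mem_filter /=.
  move=> /andP[/andP[tmp suppq] /allpairsP[[p1 q1] [/= dp _ [ep1 _]]]].
  move=> /andP[/andP[tmp' suppq'] /allpairsP[[p1' q1'] [/= dp' _ [ep1' _]]]].
  rewrite -ep1 mem_monos_of_deg in dp; rewrite -ep1' mem_monos_of_deg in dp'.
  have [_ _ tp] := layer_mmul dm (eqP dp) tmp suppq.
  have [_ _ tp'] := layer_mmul dm (eqP dp') tmp' suppq'.
  move=> e; have pp' : p = p' by rewrite -tp -tp' e.
  by move: e; rewrite pp' => /mmulI ->.
- move=> [p q] /allpairsP[[p1 q1] [/= dp dq [-> ->]]] /andP[tmp suppq].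
  rewrite mem_monos_of_deg in dp; rewrite mem_monos_of_deg in dq.
  have [tmpq ntmpq _] := layer_mmul dm (eqP dp) tmp suppq.
  by rewrite mem_monos_of_deg mdeg_mmul (eqP dp) (eqP dq) subnKC // eqxx /layer tmpq.
- move=> u; rewrite mem_monos_of_deg => /eqP du /andP[tmu ntmu].
  have [dt tmt suppt] := layer_trunc dm tmu ntmu.
  exists (trunc d u, mdiv u (trunc d u)); last by rewrite /= mdivK // trunc_dvd.
  rewrite /= tmt suppt !andbT; apply/allpairsP; exists (trunc d u, mdiv u (trunc d u)).
  rewrite /= !mem_monos_of_deg dt eqxx; split=> //.
  by rewrite -(@pdeg_ge _ _ n) // pdeg_mdiv ?trunc_dvd // !pdeg_ge // dt du.
Qed.

Lemma count_layer_lt d j : d <= mdeg m -> j < d -> count (layer d) (monos_of_deg n j) = 0.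
Proof.
move=> dm jd; apply/eqP; rewrite -leqn0 leqNgt -has_count; apply/hasP => -[u].
rewrite mem_monos_of_deg => /eqP du /andP[/dominates_mdeg].
by rewrite mdeg_trunc (minn_idPl dm) du leqNgt jd.
Qed.

Lemma count_not_dominates j :
  count (fun u => ~~ dominates m u) (monos_of_deg n j) =
  \sum_(d < mdeg m | d <= j)
     count (dominates (trunc d m)) (monos_of_deg n d) * inv1mt (n - var_idx m d) (j - d).
Proof.
rewrite -{1}(trunc_mdeg m) (@count_telescope _ _ (fun d => dominates (trunc d m))).
- rewrite [RHS]big_mkcond; apply: eq_bigr => -[d dm] _ /=.
  case: (leqP d j) => dj; first exact: count_layer.
  exact: count_layer_lt (ltnW dm) dj.
- by move=> u; apply: dominates_trunc0.
- by move=> d u; apply: dominates_trans; apply: dominates_trunc_le.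
Qed.

Lemma card_not_Borel j k : is_card (fun u => mdeg u = j /\ ~ Borel m u) k ->
  k = count (fun u => ~~ dominates m u) (monos_of_deg n j).
Proof.
move=> /is_card_count /(_ (monos_of_deg_uniq n j)); apply=> u.
rewrite mem_monos_of_deg; split=> [[-> nBu]|/andP[/eqP -> /negP nmu]].
  by rewrite eqxx; apply/negP => /Borel_iff.
by split=> // /Borel_iff.
Qed.

Lemma card_min_gen_trunc_Borel d k : d < mdeg m ->
  is_card (fun u => min_gen (trunc_ideal d (Borel m)) u /\ mdeg u = d) k ->
  k = count (dominates (trunc d m)) (monos_of_deg n d).
Proof.
move=> dm /is_card_count /(_ (monos_of_deg_uniq n d)); apply=> u.
rewrite mem_monos_of_deg; split=> [[mg du]|/andP[/eqP du tmu]].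
  by rewrite du eqxx; apply/(min_gen_trunc_Borel (ltnW dm) du).
by split=> //; apply/(min_gen_trunc_Borel (ltnW dm) du).
Qed.

End HilbertFunction.

Lemma inv1mt0 k : inv1mt 0 k = (k == 0).
Proof. by []. Qed.

Lemma inv1mtSS r k : inv1mt r.+1 k.+1 = inv1mt r.+1 k + inv1mt r k.+1.
Proof. by rewrite /= big_ord_recr. Qed.

Lemma inv1mtS0 r : inv1mt r.+1 0 = inv1mt r 0.
Proof. by rewrite /= big_ord1. Qed.

Section PowerSeries.
Local Open Scope ring_scope.
Local Arguments inv1mt : simpl never.
Implicit Types (a h : nat -> int) (D k N : nat).

(* coefficients of (1 - t) A(t) and of H(t) / (1 - t)^D *)
Definition mul1mt a : nat -> int := fun j => a j - (if j is j'.+1 then a j' else 0).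
Definition mul1mtn k a := iter k mul1mt a.
Definition div1mtn D h : nat -> int :=
  fun j => \sum_(i < j.+1) h i * (inv1mt D (j - i))%:Z.

Definition vanishes_from a N := forall i, (N <= i)%N -> a i = 0.

Lemma mul1mtnS k a : mul1mtn k.+1 a = mul1mt (mul1mtn k a).
Proof. exact: iterS. Qed.

Lemma mul1mtnD k1 k2 a : mul1mtn (k1 + k2) a = mul1mtn k1 (mul1mtn k2 a).
Proof. exact: iterD. Qed.

Lemma mul1mt_div1mtn D h : mul1mt (div1mtn D.+1 h) = div1mtn D h.
Proof.
apply: functional_extensionality => -[|j]; rewrite /mul1mt /div1mtn.
  by rewrite subr0 !big_ord1 inv1mtS0.
rewrite big_ord_recr [in RHS]big_ord_recr /= !subnn inv1mtS0.
rewrite (eq_bigr (fun i : 'I_j.+1 =>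
    h i * (inv1mt D.+1 (j - i))%:Z + h i * (inv1mt D (j.+1 - i))%:Z)) => [|i _].
  by rewrite big_split /=; ring.
by rewrite subSn ?leq_ord // inv1mtSS PoszD mulrDr.
Qed.

Lemma div1mtn0 h : div1mtn 0 h = h.
Proof.
apply: functional_extensionality => j; rewrite /div1mtn big_ord_recr /= subnn inv1mt0 mulr1.
by rewrite big1 ?add0r // => i _; rewrite inv1mt0 subn_eq0 leqNgt ltn_ord mulr0.
Qed.

Lemma div1mtnK D h : mul1mtn D (div1mtn D h) = h.
Proof.
elim: D h => [|D IH] h; first exact: div1mtn0.
by rewrite /mul1mtn iterSr -/(mul1mtn _ _) mul1mt_div1mtn IH.
Qed.

Lemma mul1mt_inj : injective mul1mt.
Proof.
move=> a b ab; apply: functional_extensionality => j; elim/ltn_ind: j => j IH.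
have := congr1 (fun f => f j) ab; rewrite /mul1mt.
by case: j IH => [|j] IH; [rewrite !subr0 | rewrite (IH j) // => /addIr].
Qed.

Lemma mul1mtn_inj k : injective (mul1mtn k).
Proof. by elim: k => [|k IH] a b //; rewrite !mul1mtnS => /mul1mt_inj /IH. Qed.

Lemma sum_mul1mt a N : \sum_(i < N.+1) mul1mt a i = a N.
Proof.
elim: N => [|N IH]; first by rewrite big_ord1 /mul1mt subr0.
by rewrite big_ord_recr /= IH /mul1mt addrC subrK.
Qed.

Lemma vanishes_from_mul1mtn k a N :
  vanishes_from a N -> vanishes_from (mul1mtn k a) (N + k).
Proof.
elim: k => [|k IH] aN; first by rewrite addn0.
move=> [|i]; rewrite addnS ?ltnS // => Ni.
by rewrite mul1mtnS /mul1mt !IH ?subr0 // ltnW.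
Qed.

Lemma sum_vanishes_from a N M : (N <= M)%N -> vanishes_from a N ->
  \sum_(i < M) a i = \sum_(i < N) a i.
Proof.
move=> NM aN; rewrite (big_ord_widen _ _ NM) [RHS]big_mkcond /=.
by apply: eq_bigr => i _; case: ltnP => // Ni; rewrite aN.
Qed.

Lemma sum_mul1mt_vanishes a N M : vanishes_from a N -> (N < M)%N ->
  \sum_(i < M) mul1mt a i = 0.
Proof. by case: M => // M aN NM; rewrite sum_mul1mt aN. Qed.

Lemma sum_seq_div1mtn D (h : seq int) j :
  \sum_(i < size h | (i <= j)%N) h`_i * (inv1mt D (j - i))%:Z = div1mtn D (nth 0 h) j.
Proof.
set F := fun i => h`_i * (inv1mt D (j - i))%:Z.
rewrite /div1mtn (@big_ord_widen_cond _ _ _ _ (size h + j.+1) (fun i => (i <= j)%N) F).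
  2: by rewrite leq_addr.
rewrite (@big_ord_widen _ _ _ j.+1 (size h + j.+1) F); last by rewrite leq_addl.
rewrite [LHS]big_mkcond [RHS]big_mkcond /=.
apply: eq_bigr => i _; rewrite ltnS; case: (leqP i j) => //= ij.
by case: ltnP => // hi; rewrite /F nth_default ?mul0r.
Qed.

End PowerSeries.

Section Multiplicity.
Local Open Scope ring_scope.
Implicit Types (a F G H : nat -> int) (hf : nat -> nat).

Definition hilb_int hf : nat -> int := fun j => (hf j)%:Z.

Lemma is_multiplicity_numerator hf e : is_multiplicity hf e ->
  exists D H N, [/\ vanishes_from H N, mul1mtn D (hilb_int hf) = H,
                    \sum_(i < N) H i = e & e != 0].
Proof.
move=> [D [h [hfE [he e0]]]]; exists D, (nth 0 h), (size h); split=> //.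
  by move=> i hi; rewrite nth_default.
suff -> : hilb_int hf = div1mtn D (nth 0 h) by apply: div1mtnK.
by apply: functional_extensionality => j; rewrite /hilb_int hfE sum_seq_div1mtn.
Qed.

(* a numerator for a larger power of 1 - t has an extra factor 1 - t, hence value 0 at t = 1 *)
Lemma numerator_value_eq hf D1 H1 N1 D2 H2 N2 : (D1 <= D2)%N ->
  vanishes_from H1 N1 -> mul1mtn D1 (hilb_int hf) = H1 ->
  vanishes_from H2 N2 -> mul1mtn D2 (hilb_int hf) = H2 -> \sum_(i < N2) H2 i != 0 ->
  \sum_(i < N1) H1 i = \sum_(i < N2) H2 i.
Proof.
move=> D12 H1N1 H1E H2N2 H2E H2_ne0.
move: H2E; rewrite -(subnK D12) mul1mtnD H1E; case: (D2 - D1)%N => [/= H2E|k H2E].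
  rewrite -H2E in H2N2 *; rewrite -(sum_vanishes_from (leq_addr N2 N1) H1N1).
  by rewrite -(sum_vanishes_from (leq_addl N1 N2) H2N2).
move: H2_ne0; rewrite -(sum_vanishes_from (leq_addr (N1 + k).+1%N N2) H2N2).
rewrite -H2E mul1mtnS.
rewrite (@sum_mul1mt_vanishes _ (N1 + k)%N) ?eqxx //; first exact: vanishes_from_mul1mtn.
by rewrite addnS ltnS leq_addl.
Qed.

Lemma is_multiplicity_unique hf e1 e2 :
  is_multiplicity hf e1 -> is_multiplicity hf e2 -> e1 = e2.
Proof.
move=> /is_multiplicity_numerator[D1 [H1 [N1 [H1N1 H1E <- H1_ne0]]]].
move=> /is_multiplicity_numerator[D2 [H2 [N2 [H2N2 H2E <- H2_ne0]]]].
case: (leqP D1 D2) => D12.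
  exact: numerator_value_eq D12 H1N1 H1E H2N2 H2E H2_ne0.
exact/esym/(numerator_value_eq (ltnW D12) H2N2 H2E H1N1 H1E H1_ne0).
Qed.

Definition shift d F : nat -> int := fun j => if (d <= j)%N then F (j - d)%N else 0.
Definition delta0 : nat -> int := fun k => (k == 0)%N%:Z.

Lemma mul1mtn_sum k s (c : nat -> int) (F : nat -> nat -> int) :
  mul1mtn k (fun j => \sum_(d < s) c d * F d j) =
  (fun j => \sum_(d < s) c d * mul1mtn k (F d) j).
Proof.
elim: k => [|k IH] //; rewrite mul1mtnS IH; apply: functional_extensionality => -[|j].
  by rewrite /mul1mt subr0; apply: eq_bigr => d _; rewrite mul1mtnS /mul1mt subr0.
by rewrite /mul1mt -sumrB; apply: eq_bigr => d _; rewrite mul1mtnS mulrBr.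
Qed.

Lemma mul1mtn_shift k d F : mul1mtn k (shift d F) = shift d (mul1mtn k F).
Proof.
elim: k => [|k IH] //; rewrite !mul1mtnS IH /mul1mt /shift.
apply: functional_extensionality => -[|j].
  by clear IH; case: d => [|d]; rewrite /= ?subr0.
case: (ltngtP d j.+1) => [dj|dj|->]; rewrite ?subnn ?ltnn ?subr0 //.
  by rewrite -ltnS dj subSn.
by rewrite leqNgt (ltnW dj) subr0.
Qed.

Lemma mul1mtn_inv1mt r : mul1mtn r (fun k => (inv1mt r k)%:Z) = delta0.
Proof.
suff -> : (fun k => (inv1mt r k)%:Z) = div1mtn r delta0 by apply: div1mtnK.
apply: functional_extensionality => j; rewrite /div1mtn big_ord_recl subn0 mul1r.
by rewrite big1 ?addr0 // => i _; rewrite mul0r.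
Qed.

Lemma vanishes_from_shift d G N : vanishes_from G N -> vanishes_from (shift d G) (d + N).
Proof.
move=> GN i di; rewrite /shift; case: ifP => // _; apply: GN.
by rewrite leq_subRL ?(leq_trans (leq_addr _ _) di).
Qed.

Lemma sum_shift d G M : \sum_(i < d + M) shift d G i = \sum_(i < M) G i.
Proof.
rewrite big_split_ord /= big1 => [|i _]; last by rewrite /shift leqNgt ltn_ord.
by rewrite add0r; apply: eq_bigr => i _; rewrite /shift /= leq_addr addKn.
Qed.

Lemma sum_mul1mtn_delta0 e M :
  (e < M)%N -> \sum_(i < M) mul1mtn e delta0 i = (e == 0)%N%:Z.
Proof.
have delta0_vanishes : vanishes_from delta0 1 by case.
case: e => [|e] eM; first by rewrite (sum_vanishes_from eM) // big_ord1.
by rewrite mul1mtnS (@sum_mul1mt_vanishes _ (1 + e)) //; apply: vanishes_from_mul1mtn.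
Qed.

Lemma is_multiplicity_sum_shift (hf c r : nat -> nat) s R :
  (forall d, (d < s)%N -> (r d <= R)%N) -> (0 < \sum_(d < s | r d == R) c d)%N ->
  (forall j, hf j = \sum_(d < s | d <= j) c d * inv1mt (r d) (j - d))%N ->
  is_multiplicity hf (\sum_(d < s | r d == R) c d)%N%:Z.
Proof.
move=> rR pos hfE; have Posz_sum := big_morph Posz PoszD (erefl 0%:Z).
have hilbE : hilb_int hf =
    fun j => \sum_(d < s) (c d)%:Z * shift d (fun k => (inv1mt (r d) k)%:Z) j.
  apply: functional_extensionality => j; rewrite /hilb_int hfE Posz_sum big_mkcond /=.
  by apply: eq_bigr => d _; rewrite /shift; case: ifP; rewrite ?PoszM ?mulr0.
set H := mul1mtn R (hilb_int hf).
have HE : H = fun j => \sum_(d < s) (c d)%:Z * shift d (mul1mtn (R - r d) delta0) j.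
  rewrite /H hilbE (mul1mtn_sum _ _ (fun d => (c d)%:Z)
    (fun d => shift d (fun k => (inv1mt (r d) k)%:Z))).
  apply: functional_extensionality => j; apply: eq_bigr => d _.
  have RE : R = (R - r d + r d)%N by rewrite subnK ?rR.
  by rewrite mul1mtn_shift [in LHS]RE mul1mtnD mul1mtn_inv1mt.
set N := (s + R)%N.
have HN : vanishes_from H N.
  move=> i Ni; rewrite HE big1 // => d _.
  rewrite (@vanishes_from_shift d _ (1 + (R - r d))) ?mulr0 //.
    by apply: vanishes_from_mul1mtn; case.
  by apply: leq_trans Ni; have := ltn_ord d; rewrite /N; lia.
have Hsum : \sum_(i < N) H i = (\sum_(d < s | r d == R) c d)%N%:Z.
  rewrite HE exchange_big Posz_sum [RHS]big_mkcond /=; apply: eq_bigr => d _.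
  have dN : (d <= N)%N by rewrite /N ltnW ?ltn_addr.
  rewrite -mulr_sumr -(subnKC dN) sum_shift sum_mul1mtn_delta0; last first.
    by have := ltn_ord d; rewrite /N; lia.
  rewrite subn_eq0 (_ : (R <= r d)%N = (r d == R)); last by have := rR d (ltn_ord d); lia.
  by case: (r d == R); rewrite ?mulr1 ?mulr0.
have nthH : nth 0 [seq H i | i <- iota 0 N] = H.
  apply: functional_extensionality => i; case: (ltnP i N) => iN.
    by rewrite (nth_map 0%N) ?size_iota // nth_iota.
  by rewrite nth_default ?size_map ?size_iota // HN.
exists R, [seq H i | i <- iota 0 N]; split; [|split].
- move=> j; rewrite sum_seq_div1mtn nthH.
  have : hilb_int hf = div1mtn R H by apply: (@mul1mtn_inj R); rewrite div1mtnK.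
  by move/(congr1 (fun f => f j)).
- by rewrite size_map size_iota -Hsum; apply: eq_bigr => i _; rewrite nthH.
- by move: pos; case: (\sum_(d < s | r d == R) c d)%N.
Qed.

End Multiplicity.

Unset Implicit Arguments.

Theorem proposition4p6 (n : nat) (m : mono n) (c hf : nat -> nat) :
  0 < mdeg m ->
  (forall d, d < mdeg m ->
     is_card (fun u => min_gen (trunc_ideal d (Borel m)) u /\ mdeg u = d) (c d)) ->
  (forall j, is_card (fun u => mdeg u = j /\ ~ Borel m u) (hf j)) ->
  (forall j, hf j = \sum_(d < mdeg m | d <= j) c d * inv1mt (n - var_idx m d) (j - d))
  /\ (forall e : int, is_multiplicity hf e <->
        e = Posz (\sum_(d < mdeg m | var_idx m d == var_idx m 0) c d)).
Proof.
move=> m_gt0 c_card hf_card.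
have cE d (dm : d < mdeg m) := card_min_gen_trunc_Borel dm (c_card d dm).
have hilbE j : hf j = \sum_(d < mdeg m | d <= j) c d * inv1mt (n - var_idx m d) (j - d).
  rewrite (card_not_Borel (hf_card j)) count_not_dominates.
  by apply: eq_bigr => d _; rewrite cE.
have c0_gt0 : 0 < c 0.
  rewrite (cE 0 m_gt0) -has_count; apply/hasP; exists [ffun=> 0].
    by rewrite mem_monos_of_deg mdeg_eq0.
  exact: dominates_trunc0.
have mult : is_multiplicity hf (\sum_(d < mdeg m | var_idx m d == var_idx m 0) c d)%:Z.
  rewrite (eq_bigl (fun d : 'I__ => n - var_idx m d == n - var_idx m 0)) => [|d]; last first.
    by rewrite eqn_sub2lE ?var_idx_le.
  apply: (@is_multiplicity_sum_shift hf c (fun d => n - var_idx m d) _ (n - var_idx m 0)).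
  - by move=> d dm; rewrite leq_sub2l // var_idx0_le.
  - by rewrite (bigD1 (Ordinal m_gt0)) //= ltn_addr.
  - exact: hilbE.
split=> // e; split=> [/is_multiplicity_unique/(_ mult) //|->//].
Qed.
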